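(* Let $K$ be an infinite field of characteristic $p>0$, let $\lambda=(\lambda_1,\dots,\lambda_n)$ and $\mu=(\mu_1,\dots,\mu_n)$ be partitions of $r$ with $\mu_2\le\lambda_1$, let $k,d$ be positive integers, and let $\mu^+=(\mu_1+kp^d,\mu_2,\dots,\mu_n)$. Let $U\in A$ and write $[U]=\sum_{T\in\mathrm{Std}(\mu)}c_T[T]$ in $\Delta(\mu)$ with $c_T\in K$. Then $[U^+]=\sum_{T\in\mathrm{Std}(\mu)}c_T[T^+]$ in $\Delta(\mu^+)$; i.e. writing $[U^+]=\sum_{T\in\mathrm{Std}(\mu)}c_{T^+}[T^+]$, one has $c_T=c_{T^+}$ for all $T\in\mathrm{Std}(\mu)$.
   Context: $V=K^n$ with basis $e_1<\dots<e_n$, written $1,\dots,n$; $D(\nu)=D_{\nu_1}V\otimes\cdots\otimes D_{\nu_n}V$ (divided powers), $i^{(a)}$ the $a$-th divided power of $e_i$. $\Delta(\nu)$ is the Weyl module of the Schur algebra $S_K(n,|\nu|)$, with the Akin–Buchsbaum–Weyman surjection $d'_\nu:D(\nu)\to\Delta(\nu)$. A tableau of shape $\nu$ is a filling of the Young diagram of $\nu$ by entries in $\{1,\dots,n\}$; it is standard if rows weakly increase and columns strictly increase; $\mathrm{Std}(\nu)$ is the set of standard tableaux of shape $\nu$. For a tableau $T$, $x_T=x_T(1)\otimes\cdots\otimes x_T(n)\in D(\nu)$ where $x_T(i)=1^{(a_{i1})}\cdots n^{(a_{in})}$ with $a_{ij}$ the number of $j$'s in row $i$, and $[T]=d'_\nu(x_T)$;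 the $[T]$, $T\in\mathrm{Std}(\nu)$, form a basis of $\Delta(\nu)$. For a tableau $T$ of shape $\mu$, $T^+$ is the tableau of shape $\mu^+$ obtained by inserting $kp^d$ entries $1$ at the start of the top row. $A$ is the set of tableaux of shape $\mu$ whose row $i$ (for each $i$) contains only entries $\ge i$ and whose first row contains exactly $\lambda_1+t$ entries equal to $1$ for some $0\le t\le\lambda_2$ (rows written as $i^{(a_{ii})}(i+1)^{(a_{i,i+1})}\cdots n^{(a_{in})}$, the first row as $1^{(\lambda_1+t)}2^{(a_{12})}\cdots n^{(a_{1n})}$). *)

From mathcomp Require Import all_boot all_order all_algebra.
Set Implicit Arguments. Unset Strict Implicit. Unset Printing Implicit Defensive.
Import GRing.Theory.
Local Open Scope ring_scope.

(* A tableau is a list of rows (row 1 first), entries are natural numbers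
   standing for basis vectors e_1,...,e_n.  Its shape is the list of row
   lengths. *)
Definition tableau := seq (seq nat).
Definition shape (T : tableau) : seq nat := map size T.

(* nu = (nu_1,...,nu_n) is a partition of r with n parts (zeros allowed). *)
Definition partition_of (n r : nat) (nu : seq nat) : bool :=
  [&& size nu == n, sorted geq nu & sumn nu == r].

Definition tab_of_shape (n : nat) (nu : seq nat) (T : tableau) : bool :=
  (shape T == nu) && all (all (fun a => (1 <= a <= n)%N)) T.

Definition is_standard (T : tableau) : bool :=
  all (sorted leq) T &&
  all (fun i => all (fun j => (nth 0 (nth [::] T i) j < nth 0 (nth [::] T i.+1) j)%N)
                    (iota 0 (size (nth [::] T i.+1))))
      (iota 0 (size T).-1).

Fixpoint words (n m : nat) : seq (seq nat) :=
  if m is m'.+1 then [seq a :: w | a <- iota 1 n, w <- words n m'] else [:: [::]].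

Fixpoint tabs_of_shape (n : nat) (sh : seq nat) : seq tableau :=
  if sh is m :: sh' then [seq r :: t | r <- words n m, t <- tabs_of_shape n sh']
  else [:: [::]].

Definition Std (n : nat) (nu : seq nat) : seq tableau :=
  [seq T <- tabs_of_shape n nu | is_standard T].

Definition tab_plus (m : nat) (T : tableau) : tableau :=
  if T is r :: T' then (nseq m 1%N ++ r) :: T' else [:: nseq m 1%N].

Definition in_A (n : nat) (lam mu : seq nat) (U : tableau) : Prop :=
  [/\ tab_of_shape n mu U,
      forall i, (i < size U)%N -> all (fun a => i.+1 <= a)%N (nth [::] U i)
    & exists2 t, (t <= nth 0 lam 1)%N &
        count_mem 1%N (nth [::] U 0) = (nth 0 lam 0 + t)%N].

(* ---------------------------------------------------------------------
   The Akin-Buchsbaum-Weyman map d'_nu : D(nu) -> Lambda(nu') and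
   Delta(nu) = image of d'_nu  (ABW's definition of the Weyl module).
   An element of Lambda^{c_1}V (x) ... (x) Lambda^{c_m}V is represented by its
   coordinate function on "column fillings" G: the coordinate of
   (e_{f^1_1} /\ ... /\ e_{f^1_{c_1}}) (x) ... at G is the product over the
   columns j of the sign of the permutation sorting column j of F onto
   column j of G, provided column j of G is strictly increasing and a
   rearrangement of column j of F, and 0 otherwise.  The coordinates at the
   G whose columns are strictly increasing of the right lengths are exactly
   the coordinates in the standard basis e_S of the tensor product of
   exterior powers, so this representation is faithful.
   --------------------------------------------------------------------- *)

(* column j (0-based) of a filling, read top to bottom *)
Definition col (F : tableau) (j : nat) : seq nat :=
  [seq nth 0 r j | r <- F & (j < size r)%N].

Definition inversions (f : seq nat) : nat :=
  (\sum_(i < size f) \sum_(j < size f | (i < j)%N) (nth 0 f j < nth 0 f i))%N.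

(* coordinate of e_{f_1} /\ ... /\ e_{f_c} on the basis vector e_g *)
Definition colcoef (K : fieldType) (f g : seq nat) : K :=
  if sorted ltn g && perm_eq f g then (-1) ^+ inversions f else 0.

Definition ncols (T : tableau) : nat := foldr maxn 0%N (shape T).

(* the diagonalization of 1^(a_1)...n^(a_n) is the sum of all distinct
   words with that content: all distinct row rearrangements of T *)
Fixpoint row_rearr (T : tableau) : seq tableau :=
  if T is r :: T' then [seq w :: F | w <- permutations r, F <- row_rearr T']
  else [:: [::]].

(* [T] = d'_nu(x_T), as a coordinate function *)
Definition weyl_el (K : fieldType) (T : tableau) : tableau -> K :=
  fun G => \sum_(F <- row_rearr T) \prod_(j < ncols T) colcoef K (col F j) (col G j).

Definition infinite_field (K : fieldType) : Prop :=
  forall s : seq K, exists x : K, x \notin s.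

(* Let s = mu_2 and m = k p^d.
   Unitriangularity: ordering tableaux of shape mu lexicographically by row sums,
   [T'](T) = 0 for standard T unless T' = T or T' comes later, and [T](T) = 1;
   moreover [X](G) <> 0 forces G to have the content of X.  Evaluating the relation
   at a latest standard T of the wrong content shows that c_T <> 0 only for T with
   the content of U, hence with at least lambda_1 >= s entries 1, all in row one.
   Long columns: below the first row, a tableau of shape mu has no entry beyond
   column s, so [T^+](G) is a sum over the arrangements w of the first row of T^+
   in which the columns of G past s are the singletons of the tail of w.  If these
   columns of G are singletons containing at least m entries 1, deleting m of them
   gives one G0 with [T^+](G) = [T](G0) for all T of shape mu, and the relation for
   U at G0 is the claim at G.  Otherwise [T^+](G) = 0 whenever the first row of T
   has at least s entries 1, so both sides vanish. *)

From mathcomp Require Import all_boot all_order all_algebra zify.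
Import GRing.Theory.
Local Open Scope ring_scope.
Set Implicit Arguments. Unset Strict Implicit. Unset Printing Implicit Defensive.

(** * Columns and row rearrangements *)

Lemma col_cons (r : seq nat) X j :
  col (r :: X) j = if (j < size r)%N then nth 0%N r j :: col X j else col X j.
Proof. by rewrite /col /=; case: ifP. Qed.

Lemma col_eq_nil (X : tableau) j : all (fun r => size r <= j)%N X -> col X j = [::].
Proof. by elim: X => [|r X IH] //= /andP[hr /IH]; rewrite col_cons ltnNge hr. Qed.

Lemma col_shape_eq_nil (X : tableau) a j :
  all (fun x => x <= a)%N (shape X) -> (a <= j)%N -> col X j = [::].
Proof.
move=> hX ha; apply: col_eq_nil; apply/allP => r rX.
exact: leq_trans (allP hX _ (map_f size rX)) ha.
Qed.

Lemma size_col (X : tableau) j : size (col X j) = count (fun r => j < size r)%N X.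
Proof. by rewrite size_map size_filter. Qed.

Lemma col_map (h : seq nat -> seq nat) (X : tableau) (a : pred (seq nat)) j :
  (forall r, (j < size (h r))%N = a r) -> col (map h X) j = [seq nth 0 (h r) j | r <- X & a r].
Proof. by move=> ha; elim: X => //= r X IH; rewrite col_cons ha IH; case: (a r). Qed.

Lemma col_map_eq (h : seq nat -> seq nat) (X : tableau) j :
  (forall r, (j < size (h r))%N = (j < size r)%N) ->
  (forall r, (j < size r)%N -> nth 0 (h r) j = nth 0 r j) -> col (map h X) j = col X j.
Proof.
by move=> hs hn; elim: X => //= r X IH; rewrite !col_cons hs IH; case: ifP => // /hn ->.
Qed.

Lemma mem_leq_sumn (l : seq nat) x : x \in l -> (x <= sumn l)%N.
Proof. by move/perm_to_rem/perm_sumn => ->; apply: leq_addr. Qed.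

Lemma mem_row_rearr (T F : tableau) : (F \in row_rearr T) = all2 perm_eq F T.
Proof.
elim: T F => [|r T IH] [|w F] //=.
- by apply/negP => /allpairsPdep[? [? [_ _]]].
- apply/allpairsPdep/andP => [[x [y [hx hy [-> ->]]]]|[hw hF]].
    by rewrite -IH -mem_permutations.
  by exists w, F; rewrite mem_permutations IH.
Qed.

Lemma row_rearr_uniq (T : tableau) : uniq (row_rearr T).
Proof.
elim: T => [|r T IH] //=; apply: allpairs_uniq => //; first exact: permutations_uniq.
by move=> [? ?] [? ?] _ _ [-> ->].
Qed.

Lemma row_rearr_refl (T : tableau) : T \in row_rearr T.
Proof. by rewrite mem_row_rearr; elim: T => //= t T ->; rewrite perm_refl. Qed.

Lemma shape_row_rearr (T F : tableau) : all2 perm_eq F T -> shape F = shape T.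
Proof.
elim: F T => [|w F IH] [|r T] //= /andP[hw /IH ->].
by rewrite (perm_size hw).
Qed.

Lemma perm_flatten_row_rearr (T F : tableau) :
  all2 perm_eq F T -> perm_eq (flatten F) (flatten T).
Proof. by elim: F T => [|w F IH] [|r T] //= /andP[hw /IH]; apply: perm_cat. Qed.

Lemma weyl_el_nil (K : fieldType) (G : tableau) : weyl_el K [::] G = 1.
Proof. by rewrite /weyl_el big_seq1 big_ord0. Qed.

(** * Standard tableaux *)

Lemma mem_words n m w : w \in words n m -> size w = m /\ all (fun a => 1 <= a <= n)%N w.
Proof.
elim: m w => [|m IH] w /=; first by rewrite inE => /eqP ->.
case/allpairsPdep=> [a [v [ha /IH[hs hv] ->]]]; split; first by rewrite /= hs.
by rewrite /= hv andbT; rewrite mem_iota in ha; lia.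
Qed.

Lemma words_uniq n m : uniq (words n m).
Proof.
elim: m => [|m IH] //=; apply: allpairs_uniq => //; first exact: iota_uniq.
by move=> [? ?] [? ?] _ _ [-> ->].
Qed.

Lemma mem_tabs_of_shape n sh T : T \in tabs_of_shape n sh -> tab_of_shape n sh T.
Proof.
rewrite /tab_of_shape; elim: sh T => [|m sh IH] T /=; first by rewrite inE => /eqP ->.
case/allpairsPdep=> [w [X [/mem_words[hw hwn] /IH /andP[/eqP hX hXn] ->]]].
by rewrite /shape /= -/(shape X) hX hw eqxx hwn.
Qed.

Lemma tabs_of_shape_uniq n sh : uniq (tabs_of_shape n sh).
Proof.
elim: sh => [|m sh IH] //=; apply: allpairs_uniq => //; first exact: words_uniq.
by move=> [? ?] [? ?] _ _ [-> ->].
Qed.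

Lemma Std_uniq n sh : uniq (Std n sh).
Proof. exact/filter_uniq/tabs_of_shape_uniq. Qed.

Lemma mem_Std n sh T : T \in Std n sh -> tab_of_shape n sh T /\ is_standard T.
Proof. by rewrite mem_filter => /andP[hT /mem_tabs_of_shape]. Qed.

Lemma is_standard_cons (t : seq nat) X :
  is_standard (t :: X) =
  [&& sorted leq t, is_standard X &
      if X is t2 :: _ then all (fun j => nth 0 t j < nth 0 t2 j)%N (iota 0 (size t2))
      else true].
Proof.
rewrite /is_standard /=; case: X => [|t2 X] /=; first by rewrite !andbT.
rewrite -[1%N]/(1 + 0)%N iotaDl all_map /=.
case: (sorted leq t) => //=; case: (sorted leq t2) => //=.
by case: (all (sorted leq) X) => //=; rewrite andbC.
Qed.

Definition colsorted (T : tableau) : Prop := forall j, sorted ltn (col T j).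

Lemma sorted_geq_head (a : nat) l : sorted geq (a :: l) -> all (fun x => x <= a)%N l.
Proof. by apply: order_path_min => x y z /= hxy hyx; apply: leq_trans hyx hxy. Qed.

Lemma sorted_geq_second M (mu' : seq nat) : sorted geq (M :: mu') ->
  (nth 0 mu' 0 <= M)%N /\ all (fun x => x <= nth 0 mu' 0)%N mu'.
Proof. by case: mu' => [|x l] //= /andP[hx /sorted_geq_head hl]; rewrite leqnn. Qed.

Lemma standard_colsorted (T : tableau) :
  is_standard T -> sorted geq (shape T) -> colsorted T.
Proof.
elim: T => [|t X IH]; first by move=> _ _ j.
rewrite is_standard_cons => /and3P[_ stX ltX] shT j.
have csX := IH stX (path_sorted shT).
rewrite col_cons; case: ifP => // hj.
case: X stX ltX shT csX {IH} => [|t2 X] // _ ltX shT csX.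
have := csX j; rewrite col_cons; case: ifP => hj2 /= hX.
  by rewrite [path _ _ _]hX andbT (allP ltX) // mem_iota.
rewrite (@col_shape_eq_nil X (size t2)) //; last by rewrite leqNgt hj2.
by apply: sorted_geq_head; case/andP: shT.
Qed.

Lemma standard_of_Std n mu T : T \in Std n mu -> sorted geq mu ->
  [/\ shape T = mu, colsorted T & all (sorted leq) T].
Proof.
case/mem_Std=> /andP[/eqP shT _] stT smu; split=> //.
  by apply: standard_colsorted; rewrite ?shT.
by case/andP: stT.
Qed.

Lemma standard_row_gt b t t2 X :
  is_standard [:: t, t2 & X] -> (size t2 <= size t)%N ->
  all (fun a => b <= a)%N t -> all (fun a => b < a)%N t2.
Proof.
rewrite is_standard_cons => /and3P[_ _ ltX] ht2 ht; apply/(all_nthP 0) => j hj.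
apply: leq_trans (allP ltX j _); last by rewrite mem_iota.
by rewrite ltnS (allP ht) // mem_nth // (leq_trans hj).
Qed.

Lemma standard_lower_rows_gt b t X :
  is_standard (t :: X) -> sorted geq (shape (t :: X)) ->
  all (fun a => b <= a)%N t -> all (all (fun a => b < a)%N) X.
Proof.
elim: X t b => [|t2 X IH] t b // stT /andP[ht2 shX] ht.
have ht2b := standard_row_gt stT ht2 ht.
have stX : is_standard (t2 :: X) by move: stT; rewrite is_standard_cons => /and3P[].
apply/andP; split=> //; apply/allP => r /(allP (IH _ _ stX shX ht2b)) /allP hr.
by apply/allP => a /hr /ltnW.
Qed.

Lemma count_ones_standard t X :
  is_standard (t :: X) -> sorted geq (shape (t :: X)) -> all (fun a => 0 < a)%N t ->
  count_mem 1%N (flatten (t :: X)) = count_mem 1%N t.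
Proof.
move=> stT shT ht; rewrite /= count_cat.
suff -> : count_mem 1%N (flatten X) = 0%N by rewrite addn0.
apply/count_memPn/flattenP => [[r rX]].
by move/(allP (allP (standard_lower_rows_gt stT shT ht) r rX)).
Qed.

Lemma count_head_leq_flatten (a : pred nat) (T : tableau) :
  (count a (head [::] T) <= count a (flatten T))%N.
Proof. by case: T => //= t X; rewrite count_cat leq_addr. Qed.

Lemma count_ones_Std n (mu : seq nat) (T : tableau) : T \in Std n mu -> sorted geq mu ->
  count_mem 1%N (flatten T) = count_mem 1%N (head [::] T).
Proof.
case: T => [|t X] // TS smu; have [shT _ _] := standard_of_Std TS smu.
have [/andP[_ /andP[ht _]] stT] := mem_Std TS.
apply: count_ones_standard; rewrite ?shT //.
by apply: sub_all ht => a /andP[].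
Qed.

(** * Unitriangularity of the Weyl elements *)

Lemma triangular_coef_eq0 (R : nzRingType) (I : eqType) (S : seq I) (P : pred I)
    (rank : I -> nat) (v : I -> I -> R) (f c : I -> R) :
  uniq S -> (forall G, f G = \sum_(T <- S) c T * v T G) ->
  (forall T, T \in S -> P T -> f T = 0) ->
  (forall T, T \in S -> v T T = 1) ->
  (forall T T', T \in S -> T' \in S -> P T -> T' != T -> v T' T != 0 ->
     P T' && (rank T < rank T')%N) ->
  forall T, T \in S -> P T -> c T = 0.
Proof.
move=> uS hf hf0 hv1 hvlt T0 T0S PT0; apply/eqP; apply: contraT => cT0.
(* At a bad [T] of maximal rank, the relation evaluated at [T] keeps only [c T]. *)
pose bad k := has (fun T => [&& P T, c T != 0 & rank T == k]) S.
have bad0 : exists k, bad k.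
  by exists (rank T0); apply/hasP; exists T0 => //; rewrite PT0 cT0 /=.
have bad_ub k : bad k -> (k <= \max_(T <- S) rank T)%N.
  by case/hasP=> T TS /and3P[_ _ /eqP <-]; apply: leq_bigmax_seq.
case: (ex_maxnP bad0 bad_ub) => _ /hasP[T TS /and3P[PT cT /eqP <-]] maxT.
have := hf T; rewrite hf0 // (bigD1_seq T) //= hv1 // mulr1 big1_seq ?addr0.
  by move/esym/eqP; rewrite (negbTE cT).
move=> T' /andP[T'T T'S].
have [->|cT'] := eqVneq (c T') 0; first by rewrite mul0r.
have [->|vT'] := eqVneq (v T' T) 0; first by rewrite mulr0.
case/andP: (hvlt T T' TS T'S PT T'T vT') => PT' ltTT'; exfalso.
suff /maxT : bad (rank T') by rewrite leqNgt ltTT'.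
by apply/hasP; exists T' => //; rewrite PT' cT' /=.
Qed.

(* The base-[B] number whose digits are the row sums: when the row sums are below
   [B], it orders tableaux of a fixed shape lexicographically by row sums. *)
Fixpoint rowsum_code (B : nat) (T : tableau) : nat :=
  if T is t :: X then (sumn t * B ^ size X + rowsum_code B X)%N else 0%N.

Lemma rowsum_code_lt B (X : tableau) :
  all (fun t => sumn t < B)%N X -> (rowsum_code B X < B ^ size X)%N.
Proof.
elim: X => [|t X IH] /=; first by rewrite expn0.
case/andP=> ht /IH hX; rewrite expnS.
apply: (@leq_trans ((sumn t).+1 * B ^ size X)); first by rewrite mulSn; lia.
by rewrite leq_mul2r ht orbT.
Qed.

Lemma sumn_leq_pointwise (s s' : seq nat) : size s = size s' ->
  (forall j, j < size s -> nth 0 s j <= nth 0 s' j)%N ->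
  (sumn s <= sumn s')%N /\ (sumn s = sumn s' -> s = s').
Proof.
elim: s s' => [|a s IH] [|a' s'] //= [hs] hle.
have ha : (a <= a')%N := hle 0%N isT.
have [hsum heq] := IH s' hs (fun j => hle j.+1).
split=> [|e]; first exact: leq_add.
have ea : a = a' by lia.
by rewrite ea heq //; lia.
Qed.

Lemma colsorted_cons t (X : tableau) : colsorted (t :: X) -> colsorted X.
Proof. by move=> cs j; have := cs j; rewrite col_cons; case: ifP => // _ /path_sorted. Qed.

Lemma colsorted_head_leq t (X : tableau) w (F : tableau) j :
  colsorted (t :: X) -> size w = size t -> perm_eq (col (w :: F) j) (col (t :: X) j) ->
  (j < size t)%N -> (nth 0 t j <= nth 0 w j)%N.
Proof.
move=> cs hw hcol hj; have := cs j; move: hcol; rewrite !col_cons hw hj => /perm_mem hm.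
have := hm (nth 0%N w j); rewrite !inE eqxx /= => /esym /predU1P[-> //|hx] /=.
by move/(order_path_min ltn_trans)/allP/(_ _ hx)/ltnW.
Qed.

Lemma rowsum_code_triangular B (T T' F : tableau) :
  shape T = shape T' -> all (fun t => sumn t < B)%N T ->
  colsorted T -> all (sorted leq) T -> all (sorted leq) T' ->
  all2 perm_eq F T' -> (forall j, perm_eq (col F j) (col T j)) ->
  (F = T /\ T' = T) \/ (rowsum_code B T < rowsum_code B T')%N.
Proof.
(* Columns of [T] increase, so the top row of [F] dominates that of [T] entrywise;
   equal row sums force equal top rows and we recurse. *)
elim: T T' F => [|t X IH] [|t' X'] [|w F] //=; try by left.
case=> hsz hsh /andP[bt bX] cs /andP[st sX] /andP[st' sX'] /andP[hw hF] hcol.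
have szw : size w = size t by rewrite (perm_size hw) hsz.
have [hle heq] := sumn_leq_pointwise (esym szw) (fun j => colsorted_head_leq cs szw (hcol j)).
have ewt' : sumn w = sumn t' by apply: perm_sumn.
have szX : size X' = size X by rewrite -(size_map size X) -(size_map size X') -/(shape X) hsh.
case: (ltngtP (sumn t) (sumn t')) => hcmp.
- right; rewrite szX; apply: (@leq_trans ((sumn t).+1 * B ^ size X)).
    by have := rowsum_code_lt bX; rewrite mulSn; lia.
  by rewrite (leq_trans _ (leq_addr _ _)) // leq_mul2r hcmp orbT.
- by move: hle; rewrite ewt' leqNgt hcmp.
have ewt : w = t by rewrite heq // ewt'.
have ett' : t' = t by apply: (sorted_eq leq_trans anti_leq) => //; rewrite -ewt perm_sym.
have hcolX j : perm_eq (col F j) (col X j).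
  by have := hcol j; rewrite !col_cons ewt; case: ifP => // _; rewrite perm_cons.
case: (IH X' F hsh bX (colsorted_cons cs) sX sX' hF hcolX) => [[-> ->]|hlt].
  by left; rewrite ewt ett'.
by right; rewrite ett' szX ltn_add2l.
Qed.

Lemma colcoef_neq0 (K : fieldType) (f g : seq nat) : colcoef K f g != 0 -> perm_eq f g.
Proof. by rewrite /colcoef; case: ifP => [/andP[]|] //; rewrite eqxx. Qed.

Lemma inversions_sorted (f : seq nat) : sorted ltn f -> inversions f = 0%N.
Proof.
move=> hf; apply: big1 => i _; apply: big1 => j hij.
by rewrite ltnNge ltnW // (sorted_ltn_nth ltn_trans 0%N hf) ?inE.
Qed.

Lemma colcoef_id (K : fieldType) (f : seq nat) : sorted ltn f -> colcoef K f f = 1.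
Proof. by move=> hf; rewrite /colcoef hf perm_refl inversions_sorted. Qed.

Lemma shape_leq_ncols (X : tableau) : all (fun x => x <= ncols X)%N (shape X).
Proof.
rewrite /ncols; elim: (shape X) => //= a s IH; rewrite leq_maxl /=.
by apply: sub_all IH => x /leq_trans; apply; apply: leq_maxr.
Qed.

Lemma weyl_term_neq0_cols (K : fieldType) (X F G : tableau) :
  all2 perm_eq F X -> shape G = shape X ->
  \prod_(j < ncols X) colcoef K (col F j) (col G j) != 0 ->
  forall j, perm_eq (col F j) (col G j).
Proof.
move=> FX shG hF j; have [hj|hj] := ltnP j (ncols X).
  by move/prodf_neq0: hF => /(_ (Ordinal hj) isT) /colcoef_neq0.
rewrite !(@col_shape_eq_nil _ (ncols X) j) //; first by rewrite shG shape_leq_ncols.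
by rewrite (shape_row_rearr FX) shape_leq_ncols.
Qed.

Lemma weyl_el_neq0_cols (K : fieldType) (X G : tableau) :
  shape G = shape X -> weyl_el K X G != 0 ->
  exists2 F, all2 perm_eq F X & forall j, perm_eq (col F j) (col G j).
Proof.
move=> shG hXG.
have [F FX hF] : exists2 F, F \in row_rearr X &
    \prod_(j < ncols X) colcoef K (col F j) (col G j) != 0.
  apply/hasP; apply: contraNT hXG => /hasPn hX.
  by rewrite /weyl_el big1_seq // => F /hX /negPn /eqP.
by rewrite mem_row_rearr in FX; exists F; last exact: weyl_term_neq0_cols hF.
Qed.

Lemma count_sum_nth (a : pred nat) (r : seq nat) N : (size r <= N)%N ->
  count a r = (\sum_(j < N) ((j < size r) && a (nth 0 r j)))%N.
Proof.
elim: r N => [|x r IH] N hN; first by rewrite big1.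
by case: N hN => // N hN; rewrite big_ord_recl /= (IH N hN).
Qed.

Lemma count_flatten_cols (a : pred nat) (X : tableau) N :
  all (fun r => size r <= N)%N X ->
  count a (flatten X) = (\sum_(j < N) count a (col X j))%N.
Proof.
elim: X => [|r X IH] /=; first by rewrite big1.
case/andP=> hr /IH hX; rewrite count_cat hX (count_sum_nth a hr) -big_split.
by apply: eq_bigr => j _; rewrite col_cons; case: ifP.
Qed.

Lemma perm_flatten_cols (X Y : tableau) :
  (forall j, perm_eq (col X j) (col Y j)) -> perm_eq (flatten X) (flatten Y).
Proof.
move=> hXY; pose N := maxn (ncols X) (ncols Y).
have hN (Z : tableau) : (ncols Z <= N)%N -> all (fun r => size r <= N)%N Z.
  move=> hZ; apply/allP => r rZ.
  exact: leq_trans (allP (shape_leq_ncols Z) _ (map_f size rZ)) hZ.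
apply/permP => a; rewrite !(count_flatten_cols a (hN _ _)) ?leq_maxl ?leq_maxr //.
by apply: eq_bigr => j _; apply/permP.
Qed.

Lemma weyl_el_neq0_perm_flatten (K : fieldType) (X G : tableau) :
  shape G = shape X -> weyl_el K X G != 0 -> perm_eq (flatten X) (flatten G).
Proof.
move=> shG /(weyl_el_neq0_cols shG)[F FX hF].
by rewrite -(permPl (perm_flatten_row_rearr FX)) perm_flatten_cols.
Qed.

Lemma weyl_el_diag (K : fieldType) (T : tableau) :
  colsorted T -> all (sorted leq) T -> weyl_el K T T = 1.
Proof.
move=> cs st; pose B := (sumn (map sumn T)).+1.
have bT : all (fun t => sumn t < B)%N T.
  by apply/allP => t tT; rewrite ltnS mem_leq_sumn // map_f.
rewrite /weyl_el (bigD1_seq T) ?row_rearr_uniq ?row_rearr_refl //=.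
rewrite big1 ?mul1r => [|j _]; last exact: colcoef_id.
rewrite big1_seq ?addr0 // => F /andP[FT]; rewrite mem_row_rearr => hF.
apply/eqP; apply: contraT => /(weyl_term_neq0_cols hF (erefl _)) hcol.
case: (rowsum_code_triangular (erefl _) bT cs st st hF hcol) => [[eF _]|].
  by move: FT; rewrite eF eqxx.
by rewrite ltnn.
Qed.

Lemma tab_of_shape_sumn_lt (n : nat) (mu : seq nat) (T : tableau) :
  tab_of_shape n mu T -> all (fun t => sumn t < (n * sumn mu).+1)%N T.
Proof.
case/andP=> /eqP shT hT; apply/allP => t tT; rewrite ltnS.
have htn : (sumn t <= n * size t)%N.
  elim: t {tT} (allP hT t tT) => //= a t IH /andP[/andP[_ ha] /IH ht].
  by rewrite mulnS leq_add.
apply: leq_trans htn _; rewrite leq_mul2l -shT.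
by rewrite mem_leq_sumn ?orbT // map_f.
Qed.

Lemma coef_eq0_content (K : fieldType) n (mu : seq nat) (U : tableau) (c : tableau -> K) :
  sorted geq mu -> shape U = mu ->
  (forall G, weyl_el K U G = \sum_(T <- Std n mu) c T * weyl_el K T G) ->
  forall T, T \in Std n mu -> ~~ perm_eq (flatten T) (flatten U) -> c T = 0.
Proof.
move=> smu shU hrel.
apply: (triangular_coef_eq0 (rank := rowsum_code (n * sumn mu).+1) (Std_uniq n mu) hrel).
- move=> T /standard_of_Std/(_ smu)[shT _ _] hTU; apply/eqP; apply: contraT.
  by move/(weyl_el_neq0_perm_flatten (etrans shT (esym shU))); rewrite perm_sym (negbTE hTU).
- by move=> T /standard_of_Std/(_ smu)[_ cs st]; apply: weyl_el_diag.
move=> T T' TS T'S hTU T'T hT'T.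
have [shT cs st] := standard_of_Std TS smu.
have [shT' _ st'] := standard_of_Std T'S smu.
have shTT' : shape T = shape T' by rewrite shT shT'.
have [F FT' hF] := weyl_el_neq0_cols shTT' hT'T.
rewrite (permPl (weyl_el_neq0_perm_flatten shTT' hT'T)) hTU /=.
have [hT _] := mem_Std TS.
have := rowsum_code_triangular shTT' (tab_of_shape_sumn_lt hT) cs st st' FT' hF.
by case=> // [[_ eT']]; rewrite eT' eqxx in T'T.
Qed.

Lemma coef_neq0_count_ones (K : fieldType) n (mu : seq nat) (U : tableau) (c : tableau -> K) :
  sorted geq mu -> shape U = mu ->
  (forall G, weyl_el K U G = \sum_(T <- Std n mu) c T * weyl_el K T G) ->
  forall T, T \in Std n mu -> c T != 0 ->
  (count_mem 1%N (head [::] U) <= count_mem 1%N (head [::] T))%N.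
Proof.
move=> smu shU hrel T TS cT; rewrite -(count_ones_Std TS smu).
have /permP -> : perm_eq (flatten T) (flatten U).
  by apply: contraNT cT => /(coef_eq0_content smu shU hrel TS) ->.
exact: count_head_leq_flatten.
Qed.

(** * The columns beyond the second row *)

Definition singletons (v : seq nat) : seq (seq nat) := [seq [:: x] | x <- v].

Definition tail_cols (G : tableau) (s L : nat) : seq (seq nat) :=
  [seq col G (s + i) | i <- iota 0 L].

Definition lead_weight (K : fieldType) (T1 G : tableau) (s : nat) (u : seq nat) : K :=
  \sum_(F1 <- row_rearr T1) \prod_(j < s) colcoef K (nth 0%N u j :: col F1 j) (col G j).

Lemma singletons_inj : injective singletons.
Proof. by apply: inj_map => x y []. Qed.

Lemma singletons_head (gs : seq (seq nat)) :
  all (fun g => size g == 1%N) gs -> gs = singletons (map (head 0%N) gs).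
Proof. by elim: gs => [|[|a []] gs IH] //= /IH <-. Qed.

Lemma colcoef_singleton (K : fieldType) x (g : seq nat) :
  colcoef K [:: x] g = (g == [:: x])%:R.
Proof.
rewrite /colcoef; have [->|gx] := eqVneq g [:: x].
  by rewrite /= perm_refl inversions_sorted.
case: ifP => // /andP[_ hxg]; move: gx (perm_size hxg) (perm_mem hxg x).
case: g {hxg} => [|y [|]] //= gx _; rewrite !inE eqxx => /esym /eqP exy.
by rewrite exy eqxx in gx.
Qed.

Lemma prod_colcoef_singletons (K : fieldType) (v : seq nat) (gs : seq (seq nat)) N :
  size v = N -> size gs = N ->
  \prod_(i < N) colcoef K [:: nth 0%N v i] (nth [::] gs i) = (gs == singletons v)%:R.
Proof.
elim: v gs N => [|x v IH] [|g gs] [|N] //=; first by rewrite big_ord0.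
case=> hv [hgs].
rewrite big_ord_recl /= colcoef_singleton (IH gs N hv hgs) eqseq_cons.
by rewrite -natrM mulnb.
Qed.

Lemma ncols_cons (r : seq nat) (X : tableau) :
  all (fun x => x <= size r)%N (shape X) -> ncols (r :: X) = size r.
Proof.
rewrite /ncols /= => hX; apply/maxn_idPl.
by elim: (shape X) hX => //= a l IH /andP[ha /IH hl]; rewrite geq_max ha.
Qed.

Lemma weyl_el_split (K : fieldType) (r1 : seq nat) (T1 G : tableau) s N :
  all (fun x => x <= s)%N (shape T1) -> size r1 = (s + N)%N ->
  weyl_el K (r1 :: T1) G =
  \sum_(w <- permutations r1 | tail_cols G s N == singletons (drop s w))
     lead_weight K T1 G s (take s w).
Proof.
move=> hT1 hr1; have hs : (s <= size r1)%N by rewrite hr1 leq_addr.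
rewrite /weyl_el ncols_cons; last by apply: sub_all hT1 => x /leq_trans; apply.
rewrite big_allpairs_dep [RHS]big_mkcond /=; apply: eq_big_seq => w.
rewrite mem_permutations => /perm_size szw.
have -> (b : bool) (x : K) : (if b then x else 0) = x * b%:R by case: b; rewrite ?mulr1 ?mulr0.
rewrite /lead_weight mulr_suml.
apply: eq_big_seq => F1; rewrite mem_row_rearr => /shape_row_rearr shF1.
rewrite hr1 big_split_ord; congr (_ * _).
  apply: eq_bigr => j _; rewrite col_cons szw hr1 /= (leq_trans (ltn_ord j)) ?leq_addr //.
  by rewrite nth_take.
rewrite -(prod_colcoef_singletons K (N := N)) ?size_map ?size_iota //; last first.
  by rewrite size_drop szw hr1 addKn.
apply: eq_bigr => i _; rewrite col_cons szw hr1 /= ltn_add2l ltn_ord nth_drop.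
rewrite (@col_shape_eq_nil F1 s) ?shF1 ?leq_addr //.
by rewrite /tail_cols (nth_map 0%N) ?size_iota // nth_iota.
Qed.

Lemma mem_take_perms_drop s (L y u : seq nat) : (s + size y = size L)%N ->
  (u \in [seq take s w | w <- permutations L & drop s w == y]) =
  (size u == s) && perm_eq L (u ++ y).
Proof.
move=> hL; apply/mapP/andP => [[w]|[/eqP hu hLu]].
  rewrite mem_filter mem_permutations => /andP[/eqP hy hLw] ->.
  rewrite size_takel ?(perm_size hLw) -?hL ?leq_addr //.
  by rewrite -hy cat_take_drop perm_sym.
exists (u ++ y); last by rewrite -hu take_size_cat.
by rewrite mem_filter mem_permutations -hu drop_size_cat // eqxx perm_sym.
Qed.

Lemma uniq_take_perms_drop s (L y : seq nat) :
  uniq [seq take s w | w <- permutations L & drop s w == y].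
Proof.
rewrite map_inj_in_uniq ?filter_uniq ?permutations_uniq // => w1 w2.
rewrite !mem_filter => /andP[/eqP h1 _] /andP[/eqP h2 _] e.
by rewrite -(cat_take_drop s w1) -(cat_take_drop s w2) e h1 h2.
Qed.

Lemma big_perms_drop_eq (R : nmodType) (f : seq nat -> R) s (L1 y1 L2 y2 : seq nat) :
  (s + size y1 = size L1)%N -> (s + size y2 = size L2)%N ->
  (forall u, size u = s -> perm_eq L1 (u ++ y1) = perm_eq L2 (u ++ y2)) ->
  \sum_(w <- permutations L1 | drop s w == y1) f (take s w) =
  \sum_(w <- permutations L2 | drop s w == y2) f (take s w).
Proof.
move=> h1 h2 hL; rewrite -[LHS]big_filter -[RHS]big_filter.
rewrite -[LHS](big_map (take s) xpredT) -[RHS](big_map (take s) xpredT).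
apply/perm_big/uniq_perm; rewrite ?uniq_take_perms_drop // => u.
by rewrite !mem_take_perms_drop //; case: eqP => // /hL ->.
Qed.

Lemma eq_lead_weight (K : fieldType) (T1 G G' : tableau) s u :
  (forall j, (j < s)%N -> col G' j = col G j) ->
  lead_weight K T1 G' s u = lead_weight K T1 G s u.
Proof. by move=> hG; apply: eq_bigr => F1 _; apply: eq_bigr => j _; rewrite hG. Qed.

Lemma weyl_el_tab_plus_shrink_tail (K : fieldType) m (r1 : seq nat) (T1 G G0 : tableau) s
    (ys y0 : seq nat) :
  all (fun x => x <= s)%N (shape T1) -> size r1 = (s + size y0)%N ->
  (forall j, (j < s)%N -> col G0 j = col G j) ->
  tail_cols G0 s (size y0) = singletons y0 -> tail_cols G s (size ys) = singletons ys ->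
  perm_eq ys (nseq m 1%N ++ y0) ->
  weyl_el K (tab_plus m (r1 :: T1)) G = weyl_el K (r1 :: T1) G0.
Proof.
move=> hT1 hr1 hG0 htail0 htail hys.
have szys : size ys = (m + size y0)%N by rewrite (perm_size hys) size_cat size_nseq.
rewrite /tab_plus (weyl_el_split _ _ hT1 (N := size ys)) ?size_cat ?size_nseq; last lia.
rewrite (weyl_el_split _ _ hT1 hr1) htail htail0.
under eq_bigl do rewrite (inj_eq singletons_inj) eq_sym.
under [RHS]eq_bigl do rewrite (inj_eq singletons_inj) eq_sym.
under [RHS]eq_bigr do rewrite (eq_lead_weight _ _ _ hG0).
apply: big_perms_drop_eq; rewrite ?size_cat ?size_nseq; try lia.
move=> u _; have hu : perm_eq (u ++ ys) (nseq m 1%N ++ (u ++ y0)).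
  by rewrite perm_sym -(perm_catCA u) perm_cat2l perm_sym.
by rewrite (permPr hu) perm_cat2l.
Qed.

Lemma weyl_el_tab_plus_eq0 (K : fieldType) m (r1 : seq nat) (T1 G : tableau) s :
  all (fun x => x <= s)%N (shape T1) -> (s <= count_mem 1%N r1)%N ->
  (forall v, m <= count_mem 1%N v -> tail_cols G s (m + (size r1 - s)) != singletons v)%N ->
  weyl_el K (tab_plus m (r1 :: T1)) G = 0.
Proof.
move=> hT1 hs hG; have hsr : (s <= size r1)%N := leq_trans hs (count_size _ _).
rewrite /tab_plus (weyl_el_split _ _ hT1 (N := m + (size r1 - s))) ?size_cat ?size_nseq //;
  last lia.
apply: big1_seq => w /andP[/eqP htail]; rewrite mem_permutations => /permP /(_ (pred1 1%N)).
rewrite count_cat count_nseq mul1n -(cat_take_drop s w) count_cat => hw.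
have hs' : (count_mem 1%N (take s w) <= s)%N.
  by rewrite (leq_trans (count_size _ _)) // size_take; case: ltnP => // /ltnW.
have /hG : (m <= count_mem 1%N (drop s w))%N by lia.
by rewrite htail eqxx.
Qed.

Lemma exists_perm_nseq (x m : nat) (ys : seq nat) : (m <= count_mem x ys)%N ->
  exists y0, perm_eq ys (nseq m x ++ y0).
Proof.
move=> hm; exists (nseq (count_mem x ys - m) x ++ filter (predC1 x) ys).
rewrite catA -nseqD subnKC // -{1}(perm_filterC (pred1 x) ys) perm_cat2r.
by have /all_pred1P -> := filter_all (pred1 x) ys; rewrite size_filter.
Qed.

Lemma exists_tail_cols_replaced (G : tableau) s (y0 : seq nat) : size (col G s) = 1%N ->
  exists G0 : tableau, (forall j, (j < s)%N -> col G0 j = col G j) /\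
    tail_cols G0 s (size y0) = singletons y0.
Proof.
rewrite size_col -size_filter; case hR: filter => [|R []] // _.
(* [R] is the only row of [G] reaching column [s]; [G0] replaces its tail by [y0]. *)
have sR : (s < size R)%N by have := mem_head R [::]; rewrite -hR mem_filter => /andP[].
pose h r := if (s < size r)%N then take s r ++ y0 else r.
have size_h r j :
    (j < size (h r))%N = if (s < size r)%N then (j < s + size y0)%N else (j < size r)%N.
  by rewrite /h; case: ifP => // hr; rewrite size_cat size_takel // ltnW.
have nth_h r j : (s < size r)%N ->
    nth 0 (h r) j = if (j < s)%N then nth 0 r j else nth 0 y0 (j - s).
  move=> hr; rewrite /h hr nth_cat size_takel ?(ltnW hr) //.
  by case: ifP => // hj; rewrite nth_take.
exists (map h G); split=> [j hj|].
  apply: col_map_eq => r.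
    by rewrite size_h; case: ifP => // /(ltn_trans hj) ->; rewrite ltn_addr.
  by case: (ltnP s (size r)) => [/nth_h -> _|hr _]; rewrite ?hj // /h ltnNge hr.
rewrite /singletons -[in RHS](mkseq_nth 0%N y0) /mkseq -map_comp /tail_cols.
apply/eq_in_map => i; rewrite mem_iota => /andP[_ hi] /=.
rewrite (@col_map _ _ (fun r => s < size r)%N) => [|r]; last first.
  rewrite size_h; case: ifP => hr; rewrite ?ltn_add2l ?hi //.
  by rewrite ltnNge (leq_trans _ (leq_addr _ _)) // leqNgt hr.
by rewrite hR /= nth_h // ltnNge leq_addr addKn.
Qed.

Lemma weyl_el_tab_plus_dichotomy (K : fieldType) m s M (mu' : seq nat) (G : tableau) :
  (0 < m)%N -> (s <= M)%N -> all (fun x => x <= s)%N mu' ->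
  (exists G0, forall T, shape T = M :: mu' ->
     weyl_el K (tab_plus m T) G = weyl_el K T G0) \/
  (forall T, shape T = M :: mu' -> (s <= count_mem 1%N (head [::] T))%N ->
     weyl_el K (tab_plus m T) G = 0).
Proof.
move=> m0 hsM hmu; set gs := tail_cols G s (m + (M - s)).
have szgs : size gs = (m + (M - s))%N by rewrite size_map size_iota.
have [/andP[hsz hcnt]|hgs] :=
  boolP (all (fun g => size g == 1%N) gs && (m <= count_mem 1%N (map (head 0%N) gs)))%N.
- left; have [y0 hy0] := exists_perm_nseq hcnt.
  have szy0 : size y0 = (M - s)%N.
    by move: (perm_size hy0); rewrite size_cat size_nseq size_map szgs => /addnI.
  have hcs : size (col G s) = 1%N.
    have : col G (s + 0) \in gs by apply: map_f; rewrite mem_iota; lia.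
    by rewrite addn0 => /(allP hsz) /eqP.
  have [G0 [hG0 htail0]] := exists_tail_cols_replaced y0 hcs.
  exists G0 => [[|r1 T1]] // [hr1 hT1].
  apply: (@weyl_el_tab_plus_shrink_tail K m r1 T1 G G0 s (map (head 0%N) gs) y0) => //.
  + by rewrite hT1.
  + by rewrite hr1 szy0; lia.
  + by rewrite size_map szgs -/gs -(singletons_head hsz).
- right => [[|r1 T1]] // [hr1 hT1] hr1s.
  apply: (@weyl_el_tab_plus_eq0 K m r1 T1 G s); rewrite ?hT1 ?hr1 // => v hv.
  apply: (contraNneq _ hgs); rewrite /gs => ->.
  have -> : map (head 0%N) (singletons v) = v by elim: (v) => //= x w ->.
  by rewrite hv andbT all_map; apply/allP.
Qed.

Theorem lemma4p4 (K : fieldType) (p n r k d : nat) (lam mu : seq nat)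
  (U : tableau) (c : tableau -> K) :
  infinite_field K -> prime p -> p \in [pchar K] ->
  partition_of n r lam -> partition_of n r mu ->
  (nth 0 mu 1 <= nth 0 lam 0)%N ->
  (0 < k)%N -> (0 < d)%N ->
  in_A n lam mu U ->
  (forall G, weyl_el K U G = \sum_(T <- Std n mu) c T * weyl_el K T G) ->
  (forall G, weyl_el K (tab_plus (k * p ^ d) U) G =
     \sum_(T <- Std n mu) c T * weyl_el K (tab_plus (k * p ^ d) T) G).
Proof.
move=> _ /prime_gt0 p0 _ _ /and3P[_ smu _] hle k0 _ [/andP[/eqP shU _] _ [t _ hU1]] hrel G.
have m0 : (0 < k * p ^ d)%N by rewrite muln_gt0 k0 expn_gt0 p0.
case: mu smu hle shU hrel => [|M mu'] smu hle shU hrel.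
  case: U shU hrel {hU1} => // _; have -> : Std n [::] = [:: [::]] by [].
  by move=> /(_ [::]); rewrite !big_seq1 !weyl_el_nil mulr1 => <-; rewrite mul1r.
set s := nth 0 mu' 0; have [hsM hmu'] := sorted_geq_second smu.
have hUs : (s <= count_mem 1%N (head [::] U))%N by rewrite -nth0 hU1 (leq_trans hle) ?leq_addr.
have hc T : T \in Std n (M :: mu') -> c T != 0 -> (s <= count_mem 1%N (head [::] T))%N.
  by move=> TS /(coef_neq0_count_ones smu shU hrel TS); apply: leq_trans.
case: (weyl_el_tab_plus_dichotomy K G m0 hsM hmu') => [[G0 hG0]|hG0].
  rewrite hG0 // hrel; apply: eq_big_seq => T /standard_of_Std/(_ smu)[shT _ _].
  by rewrite hG0.
rewrite hG0 //; apply/esym/big1_seq => T /andP[_ TS].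
have [->|/(hc _ TS) hT] := eqVneq (c T) 0; first by rewrite mul0r.
by have [shT _ _] := standard_of_Std TS smu; rewrite hG0 ?mulr0.
Qed.
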